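(* Let $c\ge2$, $k\ge c$, $s\ge1$ be integers and let $\lambda_1$ be the smallest normalized Laplacian eigenvalue of $\Gamma^c(s,k)$. Then the strong coloring number satisfies $\chi(\Gamma^c(s,k))=k=\dfrac{c-\lambda_1}{1-\lambda_1}$.
   Context: For integers $k\ge c\ge2$ and $s\ge1$, $\Gamma^c(s,k)$ is the unoriented hypergraph whose vertex set is the disjoint union of $k$ sets $V_1,\dots,V_k$ each of size $s$, and whose edges are exactly all subsets $e$ with $|e|=c$ and $|e\cap V_i|\le1$ for every $i$. For an unoriented hypergraph with every vertex of degree $\deg v=|\{e: v\in e\}|\ge1$, the adjacency matrix has $A_{v,v}=0$ and $A_{v,w}=-|\{e: v,w\in e\}|$ for $v\ne w$; the normalized Laplacian is $L=\mathrm{Id}-D^{-1}A$, $D=\mathrm{diag}(\deg v)$, with eigenvalues $\lambda_1\le\dots\le\lambda_N$. A proper strong $k$-coloring is a map $V\to\{1,\dots,k\}$ such that any two distinct vertices in a common edge receive different colors; $\chi$ is the least such $k$. *)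

From HB Require Import structures.
From mathcomp Require Import all_boot all_order all_algebra.
Set Implicit Arguments. Unset Strict Implicit. Unset Printing Implicit Defensive.
Import Order.TTheory GRing.Theory Num.Theory.
Local Open Scope ring_scope.

Definition hdeg (n : nat) (H : {set {set 'I_n}}) (v : 'I_n) : nat :=
  #|[set e in H | v \in e]|.

Definition hadj (R : numFieldType) (n : nat) (H : {set {set 'I_n}}) : 'M[R]_n :=
  \matrix_(v < n, w < n)
    (if v == w then 0 else - (#|[set e in H | (v \in e) && (w \in e)]|)%:R).

Definition hdegmx (R : numFieldType) (n : nat) (H : {set {set 'I_n}}) : 'M[R]_n :=
  diag_mx (\row_(v < n) (hdeg H v)%:R).

Definition normLap (R : numFieldType) (n : nat) (H : {set {set 'I_n}}) : 'M[R]_n :=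
  1%:M - invmx (hdegmx R H) *m hadj R H.

Definition strong_colorable (n : nat) (H : {set {set 'I_n}}) (m : nat) : Prop :=
  exists f : 'I_n -> 'I_m,
    forall e, e \in H -> forall v w, v \in e -> w \in e -> v != w -> f v != f w.

Definition strong_chromatic_number (n : nat) (H : {set {set 'I_n}}) (q : nat) : Prop :=
  strong_colorable H q /\ (forall m, strong_colorable H m -> (q <= m)%N).

(* Gamma^c(s,k): vertex set 'I_(k*s), with V_i = {v | v %/ s = i}, i < k,
   each of size s; edges are the c-subsets meeting every V_i in at most one
   vertex. *)
Definition Gamma (c s k : nat) : {set {set 'I_(k * s)}} :=
  [set e : {set 'I_(k * s)} |
     (#|e| == c) && [forall i : 'I_k, #|[set v in e | v %/ s == i]| <= 1]%N].

From mathcomp Require Import zify ring lra.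
From HB Require Import structures.
From mathcomp Require Import all_boot all_order all_algebra all_fingroup.
Import Order.TTheory GRing.Theory Num.Theory.
Set Implicit Arguments. Unset Strict Implicit. Unset Printing Implicit Defensive.

(* Colouring each vertex by its block is proper, and one vertex from each block
   gives k vertices pairwise sharing an edge, so chi = k.  Permutations of the
   vertices preserving the block partition are automorphisms of Gamma; hence
   two vertices of one block share no edge, two vertices of different blocks
   share a constant number p > 0 of edges, and double counting makes Gamma
   regular of degree d with (c - 1) d = p (k - 1) s.  Therefore
   L = I + alpha (J - B) with alpha = (c - 1) / ((k - 1) s), J the all-ones
   matrix and B the block-diagonal all-ones matrix.  Its least eigenvalue is
   1 - alpha s = (k - c) / (k - 1), attained by block-constant vectors of sum 0,
   and (c - lambda1) / (1 - lambda1) = k. *)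

Definition codeg n (H : {set {set 'I_n}}) (v w : 'I_n) : nat :=
  #|[set e in H | (v \in e) && (w \in e)]|.

Section Hypergraph.
Variables (n : nat) (H : {set {set 'I_n}}).

Lemma sum_codeg_uniform c (v : 'I_n) : {in H, forall e : {set 'I_n}, #|e| = c} ->
  \sum_(w | w != v) codeg H v w = (c - 1) * hdeg H v.
Proof.
move=> Hc; transitivity (\sum_(w | w != v) \sum_(e in [set e in H | v \in e]) (w \in e : nat)).
  apply: eq_bigr => w _; rewrite /codeg -sum1_card big_mkcond [RHS]big_mkcond /=.
  by apply: eq_bigr => e _; rewrite !inE; case: (e \in H); case: (v \in e); case: (w \in e).
rewrite exchange_big /= mulnC -sum_nat_const; apply: eq_bigr => e.
rewrite inE => /andP[/Hc ec ve].
transitivity (\sum_(w in e :\ v) 1).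
  rewrite big_mkcond [RHS]big_mkcond /=; apply: eq_bigr => w _.
  by rewrite !inE; case: (w == v); case: (w \in e).
by rewrite sum1_card -ec (cardsD1 v e) ve add1n subn1.
Qed.

Lemma codeg_le_aut (f : {perm 'I_n}) v w : {in H, forall e : {set 'I_n}, f @: e \in H} ->
  codeg H v w <= codeg H (f v) (f w).
Proof.
move=> Hf; rewrite /codeg -(card_imset _ (imset_inj (@perm_inj _ f))).
apply: subset_leq_card; apply/subsetP => E /imsetP[e].
rewrite inE => /andP[he /andP[ve we]] ->.
by rewrite inE Hf //= !(mem_imset _ _ (@perm_inj _ f)) ve we.
Qed.

Lemma normLap_regular (R : numFieldType) d v w : (forall u, hdeg H u = d) ->
  normLap R H v w = (if v == w then 1 else (codeg H v w)%:R / d%:R)%R.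
Proof.
move=> Hd; rewrite /normLap; have -> : hdegmx R H = (d%:R)%:M%R.
  by rewrite /hdegmx -diag_const_mx; congr diag_mx; apply/rowP => u; rewrite !mxE Hd.
rewrite invmx_scalar mul_scalar_mx !mxE.
by case: eqP => _; rewrite ?mulr0 ?subr0 // add0r mulrN opprK mulrC.
Qed.

End Hypergraph.

Lemma exists_perm2 (T : finType) (i j i' j' : T) :
  i != j -> i' != j' -> exists p : {perm T}, p i = i' /\ p j = j'.
Proof.
move=> ij ij'; set q := tperm i i'; have qi : q i = i' by rewrite tpermL.
exists (q * tperm (q j) j')%g; rewrite !permM tpermL; split => //.
by rewrite qi tpermD // ?(eq_sym j') // -qi (inj_eq perm_inj) eq_sym.
Qed.

Section Blocks.
Variables s k : nat.
Local Notation V := 'I_(k * s).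

Lemma block_size_gt0 (u : V) : 0 < s.
Proof. by case: s u => [|//] [u]; rewrite muln0. Qed.

Lemma part_subproof (u : V) : u %/ s < k.
Proof. by rewrite ltn_divLR ?(block_size_gt0 u). Qed.

Definition part (u : V) : 'I_k := Ordinal (part_subproof u).
Definition rem (u : V) : 'I_s := Ordinal (ltn_pmod u (block_size_gt0 u)).

Lemma vertex_subproof (i : 'I_k) (a : 'I_s) : i * s + a < k * s.
Proof. have := ltn_ord i; have := ltn_ord a; nia. Qed.

Definition vertex (i : 'I_k) (a : 'I_s) : V := Ordinal (vertex_subproof i a).

Lemma part_vertex i a : part (vertex i a) = i.
Proof.
have s_gt0 : 0 < s := leq_ltn_trans (leq0n a) (ltn_ord a).
by apply: val_inj; rewrite /= divnMDl // divn_small ?addn0.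
Qed.

Lemma rem_vertex i a : rem (vertex i a) = a.
Proof. by apply: val_inj; rewrite /= modnMDl modn_small. Qed.

Lemma vertexK u : vertex (part u) (rem u) = u.
Proof. by apply: val_inj; rewrite /= -divn_eq. Qed.

Lemma card_part i : #|[set u | part u == i]| = s.
Proof.
have -> : [set u | part u == i] = vertex i @: setT.
  apply/setP => u; rewrite !inE; apply/eqP/imsetP => [<- | [a _ ->]].
    by exists (rem u); rewrite ?vertexK.
  exact: part_vertex.
rewrite card_imset ?cardsT ?card_ord // => a b /(congr1 rem).
by rewrite !rem_vertex.
Qed.

Lemma card_other_parts u : #|[set w | part w != part u]| = (k - 1) * s.
Proof.
have -> : [set w | part w != part u] = ~: [set w | part w == part u].
  by apply/setP => w; rewrite !inE.
have := cardsC [set w | part w == part u]; rewrite card_part card_ord mulnBl mul1n.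
lia.
Qed.

Lemma relabel_subproof (p : {perm 'I_k}) (q : {perm 'I_s}) :
  injective (fun u => vertex (p (part u)) (q (rem u))).
Proof.
move=> u u' /[dup] /(congr1 part) + /(congr1 rem).
rewrite !part_vertex !rem_vertex => /perm_inj pu /perm_inj ru.
by rewrite -[u]vertexK -[u']vertexK pu ru.
Qed.

Definition relabel p q : {perm V} := perm (@relabel_subproof p q).

Lemma relabel_vertex p q i a : relabel p q (vertex i a) = vertex (p i) (q a).
Proof. by rewrite permE /= part_vertex rem_vertex. Qed.

Lemma relabel_mono p q : {mono relabel p q : u u' / part u == part u'}.
Proof. by move=> u u'; rewrite !permE /= !part_vertex (inj_eq perm_inj). Qed.

Lemma tperm_mono u u' : part u = part u' -> {mono tperm u u' : w w' / part w == part w'}.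
Proof.
move=> uu'; have E w : part (tperm u u' w) = part w by case: tpermP => // ->.
by move=> w w'; rewrite !E.
Qed.

Hypotheses (s_gt0 : 0 < s) (k_gt1 : 1 < k).

Definition i0 : 'I_k := Ordinal (ltnW k_gt1).
Definition i1 : 'I_k := Ordinal k_gt1.
Definition a0 : 'I_s := Ordinal s_gt0.

Section BlockSpectrum.
Variables (R : realFieldType) (alpha : R) (L : 'M[R]_(k * s)).
Local Open Scope ring_scope.
Hypothesis alpha_gt0 : 0 < alpha.
Hypothesis L_block : forall v w, L v w = (v == w)%:R + (part v != part w)%:R * alpha.

Lemma sum_part_const (i : 'I_k) (a : R) : \sum_(v | part v == i) a = s%:R * a.
Proof.
transitivity (\sum_(v in [set v | part v == i]) a); first by apply: eq_bigl => v; rewrite inE.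
by rewrite sumr_const card_part mulr_natl.
Qed.

Lemma mulmx_block (x : 'rV[R]_(k * s)) w :
  (x *m L) 0 w = x 0 w + alpha * (\sum_v x 0 v - \sum_(v | part v == part w) x 0 v).
Proof.
rewrite mxE; under eq_bigr do rewrite L_block mulrDr.
rewrite big_split /= (bigD1 w) //= eqxx mulr1 big1 ?addr0 => [|v /negbTE->]; last by rewrite mulr0.
congr (_ + _); rewrite [in RHS](bigID (fun v => part v == part w)) /= addrAC subrr add0r mulr_sumr.
rewrite (bigID (fun v => part v == part w)) /= big1 ?add0r => [|v /eqP->]; last first.
  by rewrite eqxx mul0r mulr0.
by apply: eq_bigr => v /negbTE->; rewrite mul1r mulrC.
Qed.

Lemma eigenvalue_block_least : eigenvalue L (1 - alpha * s%:R).
Proof.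
pose x : 'rV[R]_(k * s) := \row_v ((part v == i0)%:R - (part v == i1)%:R).
have sum_ind i : \sum_v ((part v == i)%:R : R) = s%:R.
  rewrite (bigID (fun v => part v == i)) /= [X in _ + X]big1 => [|v /negbTE->//].
  by rewrite addr0 -[RHS]mulr1 -(sum_part_const i); apply: eq_bigr => v ->.
apply/eigenvalueP; exists x; last first.
  apply/eqP => /rowP /(_ (vertex i0 a0)); rewrite !mxE part_vertex eqxx.
  by move/eqP; rewrite subr0 oner_eq0.
apply/rowP => w; rewrite mulmx_block.
have -> : \sum_v x 0 v = 0.
  by under eq_bigr do rewrite mxE; rewrite sumrB !sum_ind subrr.
have -> : \sum_(v | part v == part w) x 0 v = s%:R * x 0 w.
  by rewrite -(sum_part_const (part w)); apply: eq_bigr => v /eqP vw; rewrite !mxE vw.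
rewrite [RHS]mxE; ring.
Qed.

(* Below 1 - alpha s an eigenvector is constant on blocks, hence constant,
   which forces mu = 1 + alpha (k - 1) s. *)
Lemma eigenvalue_block_ge mu : eigenvalue L mu -> 1 - alpha * s%:R <= mu.
Proof.
case/eigenvalueP => x xL x_neq0; rewrite leNgt; apply/negP => mu_lt.
set T := \sum_v x 0 v; set K := mu - 1 + alpha * s%:R.
have as_gt0 : 0 < alpha * s%:R by rewrite mulr_gt0 ?ltr0n.
have K_lt0 : K < 0 by rewrite /K; lra.
have mu1_neq0 : mu - 1 != 0 by apply: ltr0_neq0; lra.
have eq_w w : (mu - 1) * x 0 w = alpha * (T - \sum_(v | part v == part w) x 0 v).
  have := congr1 (fun M : 'rV_(k * s) => M 0 w) xL; rewrite /= mulmx_block mxE => E.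
  by rewrite mulrBl mul1r -E addrC addKr.
have x_part w : \sum_(v | part v == part w) x 0 v = s%:R * x 0 w.
  rewrite -(sum_part_const (part w)); apply: eq_bigr => v /eqP vw.
  by apply: (mulfI mu1_neq0); rewrite !eq_w vw.
have x_const w : K * x 0 w = alpha * T.
  by have := eq_w w; rewrite x_part => E; rewrite /K mulrDl E; ring.
have T0 : T = 0.
  have : (K - alpha * (k * s)%:R) * T = 0.
    by rewrite mulrBl {1}/T mulr_sumr (eq_bigr _ (fun w _ => x_const w)) sumr_const card_ord; ring.
  move/eqP; rewrite mulf_eq0 => /orP[/eqP|/eqP //].
  have := mulr_ge0 (ltW alpha_gt0) (ler0n R (k * s)).
  lra.
move/eqP: x_neq0; apply; apply/rowP => w; rewrite mxE.
by apply: (mulfI (ltr0_neq0 K_lt0)); rewrite x_const T0 !mulr0.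
Qed.

End BlockSpectrum.

Variable c : nat.

Lemma GammaP (e : {set V}) : reflect (#|e| = c /\ {in e &, injective part}) (e \in Gamma c s k).
Proof.
rewrite inE; apply: (iffP andP) => [[/eqP ec /forallP Pe] | [ec Pe]]; split => //.
- move=> u u' hu hu' uu'; apply: (card_le1_eqP (Pe (part u))).
    by rewrite !inE hu' uu' /=.
  by rewrite !inE hu /=.
- by rewrite ec.
- apply/forallP => i; apply/card_le1_eqP => u u'.
  rewrite !inE => /andP[hu /eqP ui] /andP[hu' /eqP u'i].
  by apply: Pe => //; apply: val_inj; rewrite /= ui u'i.
Qed.

Lemma Gamma_mono (f : {perm V}) (e : {set V}) : {mono f : u u' / part u == part u'} ->
  (f @: e \in Gamma c s k) = (e \in Gamma c s k).
Proof.
move=> fP; apply/GammaP/GammaP; rewrite (card_imset _ (@perm_inj _ f)).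
- move=> [ec Pe]; split => // u u' hu hu' /eqP; rewrite -fP => /eqP.
  by move/(Pe _ _ (imset_f _ hu) (imset_f _ hu')) /perm_inj.
- move=> [ec Pe]; split => // _ _ /imsetP[u hu ->] /imsetP[u' hu' ->] /eqP.
  by rewrite fP => /eqP/Pe->.
Qed.

Lemma codeg_Gamma_mono (f : {perm V}) v w : {mono f : u u' / part u == part u'} ->
  codeg (Gamma c s k) (f v) (f w) = codeg (Gamma c s k) v w.
Proof.
move=> fP; have fVP : {mono f^-1%g : u u' / part u == part u'}.
  by move=> u u'; rewrite -fP !permKV.
apply/eqP; rewrite eqn_leq; apply/andP; split.
  have := @codeg_le_aut _ (Gamma c s k) f^-1%g (f v) (f w); rewrite !permK.
  by apply=> e; rewrite (Gamma_mono _ fVP).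
by apply: codeg_le_aut => e; rewrite (Gamma_mono _ fP).
Qed.

Lemma codeg_same_part v w : part v = part w -> v != w -> codeg (Gamma c s k) v w = 0.
Proof.
move=> vw; apply: contraTeq; rewrite -lt0n card_gt0 negbK => /set0Pn[e].
by rewrite inE => /andP[/GammaP[_ Pe] /andP[ve we]]; rewrite (Pe _ _ ve we vw).
Qed.

Definition cross_codeg := codeg (Gamma c s k) (vertex i0 a0) (vertex i1 a0).

(* Move w inside its block to the offset of v, then relabel blocks and offsets
   to reach the base pair. *)
Lemma codeg_cross v w : part v != part w -> codeg (Gamma c s k) v w = cross_codeg.
Proof.
move=> vw; set w' := vertex (part w) (rem v).
have ww' : part w = part w' by rewrite part_vertex.
have neq_v x : part x != part v -> x != v by apply: contraNneq => ->.
rewrite -(codeg_Gamma_mono v w (tperm_mono ww')) tpermL tpermD; first last.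
- by rewrite neq_v // part_vertex eq_sym.
- by rewrite neq_v // eq_sym.
have [p [pv pw]] := exists_perm2 vw (isT : i0 != i1).
rewrite -[v]vertexK -(codeg_Gamma_mono _ _ (relabel_mono p (tperm (rem v) a0))).
by rewrite !relabel_vertex pv pw tpermL.
Qed.

Lemma hdeg_Gamma u : (c - 1) * hdeg (Gamma c s k) u = cross_codeg * ((k - 1) * s).
Proof.
rewrite -sum_codeg_uniform => [|e /GammaP[] //].
rewrite (bigID (fun w => part w == part u)) /= big1 ?add0n => [|w /andP[wu /eqP]]; last first.
  by move=> /esym/codeg_same_part; rewrite eq_sym; apply.
have -> : cross_codeg * ((k - 1) * s) = \sum_(w in [set w | part w != part u]) cross_codeg.
  by rewrite sum_nat_const card_other_parts mulnC.
rewrite [LHS](eq_bigl (fun w => w \in [set w | part w != part u])) => [|w]; last first.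
  by rewrite inE andb_idl //; apply: contraNneq => ->.
by apply: eq_bigr => w; rewrite inE eq_sym => /codeg_cross.
Qed.

Hypotheses (c_gt1 : 1 < c) (c_le_k : c <= k).

Lemma cross_codeg_gt0 : 0 < cross_codeg.
Proof.
pose g (t : 'I_c) := vertex (widen_ord c_le_k t) a0.
have g_part t : part (g t) = widen_ord c_le_k t := part_vertex _ _.
have g_inj : injective g.
  by move=> t t' /(congr1 part); rewrite !g_part => /(congr1 val) /= /val_inj.
have e_in : [set g t | t : 'I_c] \in Gamma c s k.
  apply/GammaP; split; first by rewrite card_imset // card_ord.
  move=> _ _ /imsetP[t _ ->] /imsetP[t' _ ->].
  by rewrite !g_part => /(congr1 val) /= /val_inj <-.
rewrite card_gt0; apply/set0Pn; exists [set g t | t : 'I_c]; rewrite inE e_in /=.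
apply/andP; split; apply/imsetP.
- by exists (Ordinal (ltnW c_gt1)) => //; congr vertex; apply: val_inj.
- by exists (Ordinal c_gt1) => //; congr vertex; apply: val_inj.
Qed.

Lemma strong_chromatic_Gamma : strong_chromatic_number (Gamma c s k) k.
Proof.
split.
  exists part => e /GammaP[_ Pe] v w ve we; apply: contra => /eqP.
  by move/Pe => -> //.
move=> m [f f_proper].
suff /leq_card : injective (fun i => f (vertex i a0)) by rewrite !card_ord.
move=> i j; apply: contra_eq => ij.
have vw : part (vertex i a0) != part (vertex j a0) by rewrite !part_vertex.
have := cross_codeg_gt0; rewrite -(codeg_cross vw) card_gt0 => /set0Pn[e].
rewrite inE => /andP[e_in /andP[ve we]]; apply: (f_proper e) => //.
by apply: contraNneq vw => ->.
Qed.

Lemma normLap_Gamma (R : numFieldType) v w :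
  normLap R (Gamma c s k) v w =
  ((v == w)%:R + (part v != part w)%:R * ((c - 1)%:R / ((k - 1) * s)%:R))%R.
Proof.
have c1_gt0 : 0 < c - 1 by rewrite subn_gt0.
have hdegE u : hdeg (Gamma c s k) u = hdeg (Gamma c s k) v.
  by apply/eqP; rewrite -(eqn_pmul2l c1_gt0) !hdeg_Gamma.
rewrite (normLap_regular _ _ _ hdegE); case: eqP => [-> | /eqP vw].
  by rewrite !eqxx mul0r addr0.
case: (eqVneq (part v) (part w)) => [pvw | pvw].
  by rewrite codeg_same_part //= !mul0r add0r.
rewrite codeg_cross //= add0r mul1r.
have ks_gt0 : 0 < (k - 1) * s by rewrite muln_gt0 subn_gt0 k_gt1.
have d_gt0 : 0 < hdeg (Gamma c s k) v.
  have := muln_gt0 cross_codeg ((k - 1) * s).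
  by rewrite cross_codeg_gt0 ks_gt0 -(hdeg_Gamma v) muln_gt0 => /andP[].
by apply/eqP; rewrite eqr_div ?pnatr_eq0 -?lt0n // -!natrM (hdeg_Gamma v).
Qed.

Lemma Gamma_ratio (R : numFieldType) :
  let lambda : R := (1 - (c - 1)%:R / ((k - 1) * s)%:R * s%:R)%R in
  (k%:R = (c%:R - lambda) / (1 - lambda))%R.
Proof.
rewrite /= natrM !natrB ?(ltnW c_gt1) ?(ltnW k_gt1) //.
have s_neq0 : (s%:R != 0 :> R)%R by rewrite pnatr_eq0 -lt0n.
have k1_neq0 : (k%:R - 1 != 0 :> R)%R by rewrite subr_eq0 pnatr_eq1 gtn_eqF.
have c1_neq0 : (c%:R - 1 != 0 :> R)%R by rewrite subr_eq0 pnatr_eq1 gtn_eqF.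
field; rewrite s_neq0 k1_neq0 /=.
by rewrite opprB addrC subrK.
Qed.

End Blocks.

Local Open Scope ring_scope.

Theorem mainTheorem5 (R : realFieldType) (c k s : nat)
  (hc : (2 <= c)%N) (hk : (c <= k)%N) (hs : (1 <= s)%N) (lambda1 : R) :
  eigenvalue (normLap R (Gamma c s k)) lambda1 ->
  (forall mu : R, eigenvalue (normLap R (Gamma c s k)) mu -> lambda1 <= mu) ->
  strong_chromatic_number (Gamma c s k) k /\
  (k%:R : R) = (c%:R - lambda1) / (1 - lambda1).
Proof.
move=> l1_eig l1_min; have k_gt1 : (1 < k)%N := leq_trans hc hk.
have L_block := normLap_Gamma hs k_gt1 hc hk R.
set alpha : R := (c - 1)%:R / ((k - 1) * s)%:R in L_block.
have alpha_gt0 : 0 < alpha by rewrite divr_gt0 // ltr0n ?subn_gt0 // muln_gt0 subn_gt0 k_gt1.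
have -> : lambda1 = 1 - alpha * s%:R.
  apply/le_anti; rewrite l1_min ?(eigenvalue_block_least hs k_gt1 L_block) //=.
  exact: (eigenvalue_block_ge hs alpha_gt0 L_block l1_eig).
by split; [exact: strong_chromatic_Gamma | exact: Gamma_ratio].
Qed.
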